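(* Let $\mathbf p$ be a probability vector with strictly positive entries and fix $\varepsilon>0$ such that $1-\varepsilon>\max_{n,i}\lambda_i^{(n)}$. There exists a constant $C_1=C_1(F,\mathbf p,\varepsilon)<\infty$ such that for all $\mathbf i\in\Sigma$ and $0<R\le1$, \[ \frac{\mu_{\mathbf p}(B_{\mathbf i}(R))}{\mu_{\mathbf p}(B_{\mathbf i}((1-\varepsilon)R))}\le C_1. \]
   Context: Setting: $\mathcal I=\{1,\dots,N\}$, $f_i(x)=A_ix+t_i$ on $\mathbb R^d$ with $A_i=\mathrm{diag}(\lambda_i^{(1)},\dots,\lambda_i^{(d)})$, all $\lambda_i^{(n)}\in(0,1)$, $f_i([0,1]^d)\subset[0,1]^d$, no two maps agree on $[0,1]^d$, and for all $m\ne n$ some $i$ has $\lambda_i^{(n)}\ne\lambda_i^{(m)}$; $F$ is the attractor. $\Sigma=\mathcal I^{\mathbb N}$, $\mu_{\mathbf p}=\mathbf p^{\mathbb N}$. For $\mathbf i\in\Sigma$, $r>0$, $L_{\mathbf i}(r,n)$ is the unique integer with $\prod_{\ell=1}^{L_{\mathbf i}(r,n)}\lambda_{i_\ell}^{(n)}\le r<\prod_{\ell=1}^{L_{\mathbf i}(r,n)-1}\lambda_{i_\ell}^{(n)}$. $\mathbf i$ determines a $\sigma$-ordered cube at scale $r$ if $L_{\mathbf i}(r,\sigma_d)\le\dots\le L_{\mathbf i}(r,\sigma_1)$, ties resolved by: if coordinates $k<m$ have $L_{\mathbf i}(r,k)=L_{\mathbf i}(r,m)$ then $k$ precedes $m$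 iff $\prod_{\ell=1}^{L_{\mathbf i}(r,k)}\lambda_{i_\ell}^{(k)}\ge\prod_{\ell=1}^{L_{\mathbf i}(r,k)}\lambda_{i_\ell}^{(m)}$; write $\sigma_{\mathbf i}(r)$ for this ordering. $E_n^\sigma$: span of coordinate axes $\sigma_1,\dots,\sigma_n$; $f_i,f_j$ overlap exactly on $E_n^\sigma$ if their orthogonal projections onto $E_n^\sigma$ agree on $[0,1]^d$. For $1\le n\le d-1$, $\mathcal I_n^\sigma$ is the set of $j$ such that no $i<j$ overlaps exactly with $j$ on $E_n^\sigma$; $\mathcal I_d^\sigma=\mathcal I$; $\Pi_n^\sigma j$ is the unique element of $\mathcal I_n^\sigma$ overlapping exactly with $j$ on $E_n^\sigma$, extended to $\Sigma$ coordinatewise. The symbolic approximate cube is $B_{\mathbf i}(r)=\{\mathbf j\in\Sigma:|\Pi_n^\sigma\mathbf j\wedge\Pi_n^\sigma\mathbf i|\ge L_{\mathbf i}(r,\sigma_n)\ \forall\,1\le n\le d\}$ with $\sigma=\sigma_{\mathbf i}(r)$ and $\wedge$ the longest common prefix. *)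

From HB Require Import structures.
From mathcomp Require Import all_boot all_order all_algebra all_fingroup.
From mathcomp Require Import all_classical all_reals all_analysis.
Set Implicit Arguments. Unset Strict Implicit. Unset Printing Implicit Defensive.
Import Order.TTheory GRing.Theory Num.Theory.
Local Open Scope ring_scope.

(* Symbolic space Sigma = I^N with I = {0,...,N} (i.e. N.+1 maps, 0-indexed);
   position l of a word corresponds to the paper's i_{l+1}. *)
Definition Sigma (N : nat) := (nat -> 'I_N.+1)%type.

HB.instance Definition _ (N : nat) := gen_eqMixin (Sigma N).
HB.instance Definition _ (N : nat) := gen_choiceMixin (Sigma N).
HB.instance Definition _ (N : nat) :=
  isPointed.Build (Sigma N) (fun _ => ord0).

Definition cyl (N : nat) (u : seq 'I_N.+1) : set (Sigma N) :=
  [set v | forall l, (l < size u)%N -> v l = nth ord0 u l]%classic.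

Definition SigmaM (N : nat) := g_sigma_algebraType (range (@cyl N)).

Section IFS.
Variables (R : realType) (N d : nat) (lam t : 'I_N.+1 -> 'I_d -> R).

Definition fIFS (i : 'I_N.+1) (x : 'I_d -> R) : 'I_d -> R :=
  fun n => lam i n * x n + t i n.

Definition inCube (x : 'I_d -> R) : Prop := forall n, 0 <= x n <= 1.

Definition prodlam (w : Sigma N) (n : 'I_d) (k : nat) : R :=
  \prod_(l < k) lam (w l) n.

(* L_w(r,n): least k with prod_{l<=k} lambda^{(n)} <= r (0 if none) *)
Definition Lsc (w : Sigma N) (r : R) (n : 'I_d) : nat :=
  match pselect (exists k, (fun k => prodlam w n k <= r) k) with
  | left h => ex_minn h
  | right _ => 0%N
  end.

Definition tie (w : Sigma N) (r : R) (k m : 'I_d) : bool :=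
  prodlam w m (Lsc w r k) <= prodlam w k (Lsc w r k).

Definition prec (w : Sigma N) (r : R) (k m : 'I_d) : bool :=
  (Lsc w r m < Lsc w r k)%N ||
  ((Lsc w r k == Lsc w r m) &&
   (if (k < m)%N then tie w r k m else ~~ tie w r m k)).

Definition is_ordering (w : Sigma N) (r : R) (s : {perm 'I_d}) : bool :=
  [forall a : 'I_d, forall b : 'I_d, (a < b)%N ==> prec w r (s a) (s b)].

Definition sigma_ord (w : Sigma N) (r : R) : {perm 'I_d} :=
  odflt 1%g [pick s : {perm 'I_d} | is_ordering w r s].

(* coordinates spanning E_n^s : s_1, ..., s_n  (0-indexed: s m, m < n) *)
Definition Ecoords (s : {perm 'I_d}) (n : nat) : {set 'I_d} :=
  [set s m | m : 'I_d & (m < n)%N].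

Definition overlap (S : {set 'I_d}) (i j : 'I_N.+1) : Prop :=
  forall x, inCube x -> forall k, k \in S -> fIFS i x k = fIFS j x k.

Definition Iset (S : {set 'I_d}) (n : nat) : {set 'I_N.+1} :=
  if (n < d)%N then
    [set j : 'I_N.+1 | ~~ [exists i : 'I_N.+1, (i < j)%N && `[< overlap S i j >]]]
  else [set: 'I_N.+1].

Definition PiI (S : {set 'I_d}) (n : nat) (j : 'I_N.+1) : 'I_N.+1 :=
  odflt j [pick i in Iset S n | `[< overlap S i j >]].

Definition Bsym (w : Sigma N) (r : R) : set (Sigma N) :=
  [set v | forall n : 'I_d,
     let s := sigma_ord w r in
     let S := Ecoords s n.+1 in
     forall l, (l < Lsc w r (s n))%N -> PiI S n.+1 (v l) = PiI S n.+1 (w l)]%classic.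

End IFS.

(* A word v lies in the symbolic approximate cube B_w(r) iff, for every position l,
   the digit v_l overlaps w_l exactly on every coordinate k with l < L_w(r,k): since
   sigma_w(r) lists the coordinates by decreasing L_w(r,.), the nested conditions in
   the definition collapse to this.  So B_w(r) is a product set and its measure is
   the product over l of p(A_r(l)), where A_r(l) = Bsym_digits w r l is the set of
   allowed digits.
   Passing from r to (1-eps)r raises each L_w(.,k) by at most one, hence A_r(l) and
   A_{(1-eps)r}(l) differ only at the d positions l = L_w(r,k), where the ratio of
   the two factors is at most 1 / min_i p_i.  This gives C1 = (prod_i p_i)^(-d). *)

From HB Require Import structures.
From mathcomp Require Import all_boot all_order all_algebra all_fingroup.
From mathcomp Require Import all_classical all_reals all_analysis.
From mathcomp Require Import zify.
Import Order.TTheory GRing.Theory Num.Theory.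
Local Open Scope classical_set_scope.
Local Open Scope ring_scope.

Lemma exists_perm_sorted (d : nat) (lt : rel 'I_d) :
  irreflexive lt -> transitive lt -> (forall a b, a != b -> lt a b || lt b a) ->
  exists s : {perm 'I_d}, forall a b : 'I_d, (a < b)%N -> lt (s a) (s b).
Proof.
move=> lt_irr lt_trans lt_total.
pose rk k := #|[pred m | lt m k]|.
have rk_lt a b : lt a b -> (rk a < rk b)%N.
  move=> ab; apply: proper_card; apply/properP; split.
    by apply/fintype.subsetP => m; rewrite !inE => /lt_trans; apply.
  by exists a; rewrite !inE ?lt_irr.
have rk_mono : {mono rk : a b / lt a b >-> (a < b)%N}.
  move=> a b; have [<-|ab] := eqVneq a b; first by rewrite ltnn lt_irr.
  case/orP: (lt_total a b ab) => [ab'|ba]; first by rewrite ab' rk_lt.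
  have nab : ~~ lt a b by apply/negP => ab'; have := lt_trans _ _ _ ab' ba; rewrite lt_irr.
  by rewrite (negbTE nab) ltnNge ltnW // rk_lt.
have rk_bound k : (rk k < d)%N.
  rewrite -[d]card_ord; apply: proper_card; apply/properP; split.
    exact: subset_predT.
  by exists k; rewrite ?inE ?lt_irr.
have f_inj : injective (fun k => Ordinal (rk_bound k)).
  move=> a b [] /eqP; apply: contraTeq => ab.
  by case/orP: (lt_total a b ab) => /rk_lt; rewrite neq_ltn => ->; rewrite ?orbT.
have rkV k : rk ((perm f_inj)^-1 k)%g = k.
  by rewrite -[RHS](congr1 val (permKV (perm f_inj) k)) permE.
by exists (perm f_inj)^-1%g => a b; rewrite -rk_mono !rkV.
Qed.

Lemma ler_prod_except {R : numDomainType} (I : finType) (E : {pred I}) (a b : I -> R)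
    (c : R) (D : nat) :
  0 <= c <= 1 -> (forall i, 0 <= a i <= 1) -> (forall i, c <= b i) ->
  (forall i, i \notin E -> a i = b i) -> (#|E| <= D)%N ->
  c ^+ D * \prod_i a i <= \prod_i b i.
Proof.
move=> /andP[c_ge0 c_le1] a01 c_b ab_out E_D.
rewrite (bigID E) [X in _ <= X](bigID E) /=.
rewrite [X in _ * (_ * X) <= _](eq_bigr b); last by move=> i /ab_out.
rewrite mulrA ler_wpM2r //.
  by apply: prodr_ge0 => i _; apply: le_trans (c_b i).
apply: (@le_trans _ _ (c ^+ D)).
  rewrite ler_piMr ?exprn_ge0 //; apply: prodr_ile1 => i _; exact: a01.
apply: (@le_trans _ _ (c ^+ #|E|)); first exact: ler_wiXn2l.
by rewrite -prodr_const; apply: ler_prod => i _; rewrite c_ge0 c_b.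
Qed.

Lemma card_ord_in_codom (T : finType) (M : nat) (f : T -> nat) :
  (#|[set l : 'I_M | (l : nat) \in codom f]%SET| <= #|T|)%N.
Proof.
rewrite cardE -(size_map (@nat_of_ord M)) -(size_codom f); apply: uniq_leq_size.
  by rewrite (map_inj_uniq (@ord_inj M)) enum_uniq.
by move=> x /mapP[l]; rewrite mem_enum inE => lf ->.
Qed.

Section ProbabilityVector.
Context {R : numDomainType} {N : nat} {p : 'I_N.+1 -> R}.
Hypotheses (p_gt0 : forall i, 0 < p i) (p_sum1 : \sum_i p i = 1).

Lemma psum_ge0 (A : {set 'I_N.+1}) : 0 <= \sum_(j in A) p j.
Proof. by apply: sumr_ge0 => j _; apply: ltW. Qed.

Lemma psum_le1 (A : {set 'I_N.+1}) : \sum_(j in A) p j <= 1.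
Proof.
rewrite -p_sum1 [X in _ <= X](bigID (mem A)) /= lerDl.
by apply: sumr_ge0 => j _; apply: ltW.
Qed.

Lemma p_le_psum (A : {set 'I_N.+1}) i : i \in A -> p i <= \sum_(j in A) p j.
Proof.
move=> iA; rewrite (bigD1 i) //= lerDl.
by apply: sumr_ge0 => j _; apply: ltW.
Qed.

Lemma p_le1 i : p i <= 1.
Proof. by apply: le_trans (psum_le1 [set: 'I_N.+1]%SET); exact: p_le_psum. Qed.

Lemma prod_p_le i : \prod_j p j <= p i.
Proof.
rewrite (bigD1 i) //= ler_piMr ?(ltW (p_gt0 i)) //.
by apply: prodr_ile1 => j _; rewrite ltW ?p_le1.
Qed.

End ProbabilityVector.

Section Rectangles.
Context {R : realType} {N : nat} {p : 'I_N.+1 -> R}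
  {mu : {measure set (SigmaM N) -> \bar R}}.
Hypothesis mu_cyl : forall u, mu (cyl u) = (\prod_(a <- u) p a)%:E.

Definition rect (A : nat -> {set 'I_N.+1}) (a b : nat) : set (SigmaM N) :=
  [set v | forall l, (a <= l < b)%N -> v l \in A l].

Lemma measurable_cyl u : measurable (cyl u : set (SigmaM N)).
Proof. by apply: sub_sigma_algebra; exists u. Qed.

Lemma cyl_rect0 A u : cyl u `&` rect A (size u) (size u + 0) = cyl u.
Proof.
apply/setIidl => v _ l; rewrite addn0 => /andP[ul lu].
by have := leq_ltn_trans ul lu; rewrite ltnn.
Qed.

Lemma cyl_rectS A u M :
  cyl u `&` rect A (size u) (size u + M.+1) =
  \big[setU/set0]_(j < N.+1 | j \in A (size u))
     (cyl (rcons u j) `&` rect A (size u).+1 ((size u).+1 + M)).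
Proof.
rewrite -bigcup_seq_cond; apply/seteqP; split => v.
  move=> [vu vA]; exists (v (size u)).
    by rewrite /= mem_index_enum vA // leqnn addnS ltnS leq_addr.
  split=> [l|l /andP[ul lM]]; last by apply: vA; rewrite ltnW // -addSnnS.
  rewrite size_rcons ltnS leq_eqVlt nth_rcons => /orP[/eqP->|ul].
    by rewrite ltnn eqxx.
  by rewrite ul; apply: vu.
case=> j /= /andP[_ jA] [vuj vA]; have vj := vuj (size u).
rewrite size_rcons nth_rcons ltnn eqxx in vj; split.
  by move=> l ul; have := vuj l; rewrite size_rcons nth_rcons ul; apply; apply: ltnW.
move=> l /andP[]; rewrite leq_eqVlt => /orP[/eqP<- _|ul lM]; first by rewrite vj.
by apply: vA; rewrite ul addSnnS.
Qed.

Lemma measurable_cyl_rect A u M :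
  measurable ((cyl u : set (SigmaM N)) `&` rect A (size u) (size u + M)).
Proof.
elim: M u => [|M IH] u; first by rewrite cyl_rect0; apply: measurable_cyl.
rewrite cyl_rectS; apply: bigsetU_measurable => j _.
by have := IH (rcons u j); rewrite size_rcons.
Qed.

Lemma measure_cyl_rect A u M :
  mu ((cyl u : set (SigmaM N)) `&` rect A (size u) (size u + M)) =
  ((\prod_(a <- u) p a) * \prod_(size u <= l < size u + M) \sum_(j in A l) p j)%:E.
Proof.
elim: M u => [|M IH] u; first by rewrite cyl_rect0 mu_cyl addn0 big_geq // mulr1.
have sizeS j : (size u).+1 = size (rcons u j) by rewrite size_rcons.
rewrite cyl_rectS measure_bigsetU_ord_cond; first last.
- move=> i j _ _ [v [[vui _] [vuj _]]].
  have := vui (size u); have := vuj (size u).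
  by rewrite !size_rcons !nth_rcons ltnn eqxx ltnSn => /(_ isT) <- /(_ isT) ->.
- by move=> j _; rewrite (sizeS j); apply: measurable_cyl_rect.
have muS j : mu (cyl (rcons u j) `&` rect A (size u).+1 ((size u).+1 + M)) =
    ((\prod_(a <- u) p a * p j) * \prod_((size u).+1 <= l < (size u).+1 + M)
       \sum_(i in A l) p i)%:E.
  by rewrite [in LHS](sizeS j) IH -(sizeS j) big_rcons.
rewrite (eq_bigr _ (fun j _ => muS j)) sumEFin [in RHS]addnS.
by rewrite [in RHS]big_ltn ?ltnS ?leq_addr // -addSn mulrA mulr_sumr mulr_suml.
Qed.

Lemma measure_rect A M :
  mu (rect A 0 M) = (\prod_(l < M) \sum_(j in A l) p j)%:E.
Proof.
have := measure_cyl_rect A [::] M.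
have -> : cyl [::] = [set: SigmaM N] by apply/seteqP; split => // v _ l.
by rewrite setTI big_nil mul1r big_mkord.
Qed.

End Rectangles.

Section CubeOrdering.
Context {R : realType} {N d : nat} (lam : 'I_N.+1 -> 'I_d -> R).
Variables (w : Sigma N) (r : R).
Local Notation L k := (Lsc lam w r k).
Local Notation Q k := (prodlam lam w k (L k)).

Lemma precE k m : prec lam w r k m =
  (L m < L k)%N || ((L k == L m) && ((Q m < Q k) || ((Q m == Q k) && (k < m)%N))).
Proof.
rewrite /prec /tie; case: (ltngtP (L m) (L k)) => //= <-.
case: (ltngtP k m) => [||/val_inj <-] /=.
- by rewrite le_eqVlt andbT orbC.
- by rewrite -ltNge andbF orbF.
- by rewrite lexx ltxx andbF.
Qed.

Lemma prec_irr : irreflexive (prec lam w r).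
Proof. by move=> k; rewrite precE !ltnn ltxx !andbF. Qed.

Lemma prec_trans : transitive (prec lam w r).
Proof.
move=> b a c; rewrite !precE.
case/orP=> [ab|/andP[/eqP-> ab]]; case/orP=> [bc|/andP[/eqP<- bc]].
- by rewrite (ltn_trans bc ab).
- by rewrite ab.
- by rewrite bc.
rewrite eqxx ltnn /=.
move: ab bc => /orP[ab|/andP[/eqP-> ab]] /orP[bc|/andP[/eqP Qcb bc]].
- by rewrite (lt_trans bc ab).
- by rewrite Qcb ab.
- by rewrite bc.
- by rewrite Qcb eqxx ltxx (ltn_trans ab bc) orbT.
Qed.

Lemma prec_total a b : a != b -> prec lam w r a b || prec lam w r b a.
Proof.
move=> ab; rewrite !precE; case: (ltngtP (L b) (L a)) => //= _.
case: (ltgtP (Q b) (Q a)) => //= _.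
by case: (ltngtP a b) => // /val_inj eq_ab; rewrite eq_ab eqxx in ab.
Qed.

Lemma sigma_ordP : is_ordering lam w r (sigma_ord lam w r).
Proof.
rewrite /sigma_ord; case: pickP => [s -> //|no_ordering].
have [s s_sorted] := @exists_perm_sorted d _ prec_irr prec_trans prec_total.
suff : is_ordering lam w r s by rewrite no_ordering.
by apply/forallP => a; apply/forallP => b; apply/implyP; apply: s_sorted.
Qed.

Lemma sigma_ord_sorted (a b : 'I_d) : (a <= b)%N ->
  (L (sigma_ord lam w r b) <= L (sigma_ord lam w r a))%N.
Proof.
rewrite leq_eqVlt => /orP[/eqP/val_inj-> //|ab].
move/forallP/(_ a)/forallP/(_ b)/implyP/(_ ab): sigma_ordP.
by rewrite precE => /orP[/ltnW //|/andP[/eqP-> _]].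
Qed.

End CubeOrdering.

Section ApproximateCubes.
Context {R : realType} {N d : nat} (lam t : 'I_N.+1 -> 'I_d -> R).
Local Notation overlap := (overlap lam t).

Lemma overlap_refl S : reflexive (fun i j => `[< overlap S i j >]).
Proof. by move=> i; apply/asboolP. Qed.

Lemma overlap_sym {S i j} : overlap S i j -> overlap S j i.
Proof. by move=> ij x cx k kS; rewrite ij. Qed.

Lemma overlap_trans {S i j k} : overlap S i j -> overlap S j k -> overlap S i k.
Proof. by move=> ij jk x cx m mS; rewrite ij // jk. Qed.

Lemma Iset_rep S n j : exists i, (i \in Iset lam t S n) && `[< overlap S i j >].
Proof.
have [i /asboolP ij i_min] :=
  @arg_minnP _ j (fun i => `[< overlap S i j >]) val (overlap_refl S j).
exists i; rewrite (asboolT ij) andbT /Iset; case: ifP => _; last by rewrite inE.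
rewrite inE; apply/existsPn => i'; apply/negP => /andP[i'i /asboolP i'_ov].
by have := i_min i' (asboolT (overlap_trans i'_ov ij)); rewrite leqNgt i'i.
Qed.

Lemma PiI_overlap S n j : overlap S (PiI lam t S n j) j.
Proof.
rewrite /PiI; case: pickP => [i /andP[_ /asboolP] //|none].
by have [i] := Iset_rep S n j; rewrite none.
Qed.

Lemma PiI_eq S n i j : PiI lam t S n i = PiI lam t S n j <-> overlap S i j.
Proof.
split=> [ij|ij].
  have := PiI_overlap S n j; rewrite -ij.
  exact: overlap_trans (overlap_sym (PiI_overlap S n i)).
rewrite /PiI (@eq_pick _ _ (fun k => (k \in Iset lam t S n) && `[< overlap S k j >])).
  case: pickP => [//|none].
  by have [k] := Iset_rep S n j; rewrite none.
move=> k /=; congr andb; apply/asboolP/asboolP => [ki|kj].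
  exact: overlap_trans ki ij.
exact: overlap_trans kj (overlap_sym ij).
Qed.

Definition Bsym_digits (w : Sigma N) (r : R) (l : nat) : {set 'I_N.+1} :=
  [set j | `[< overlap [set k | (l < Lsc lam w r k)%N] j (w l) >]].

Lemma mem_Bsym_digits w r l : w l \in Bsym_digits w r l.
Proof. by rewrite inE overlap_refl. Qed.

Lemma BsymE w r : Bsym lam t w r = [set v | forall l, v l \in Bsym_digits w r l].
Proof.
set s := sigma_ord lam w r.
apply/seteqP; split => v vB.
  move=> l; rewrite inE; apply/asboolP => x cx k; rewrite inE => lk.
  have k_s : s (s^-1 k)%g = k by rewrite permKV.
  have := vB (s^-1 k)%g l; rewrite /= -/s k_s => /(_ lk) /PiI_eq; apply => //.
  by apply/imsetP; exists (s^-1 k)%g; rewrite ?inE ?k_s.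
move=> n /= l lL; apply/PiI_eq => x cx k /imsetP[m]; rewrite inE => mn ->.
move: (vB l); rewrite inE => /asboolP; apply => //; rewrite inE.
exact: leq_trans lL (sigma_ord_sorted lam w r _ _ mn).
Qed.

Lemma Bsym_digits_full w r l :
  (forall k, Lsc lam w r k <= l)%N -> Bsym_digits w r l = [set: 'I_N.+1]%SET.
Proof.
move=> Ll; apply/setP => j; rewrite !inE; apply/asboolP => x cx k.
by rewrite inE ltnNge Ll.
Qed.

Lemma Bsym_digits_scale w r r' l :
  (forall k, Lsc lam w r k <= Lsc lam w r' k <= (Lsc lam w r k).+1)%N ->
  (forall k, Lsc lam w r k != l) -> Bsym_digits w r l = Bsym_digits w r' l.
Proof.
move=> L_step Ll; rewrite /Bsym_digits.
suff -> : [set k | (l < Lsc lam w r k)%N]%SET = [set k | (l < Lsc lam w r' k)%N]%SET by [].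
apply/setP => k; rewrite !inE; have := L_step k; have := Ll k; lia.
Qed.

End ApproximateCubes.

Lemma Lsc_scale {R : realType} {N d : nat} (lam : 'I_N.+1 -> 'I_d -> R)
    (w : Sigma N) (n : 'I_d) (c r : R) :
  0 <= r -> c <= 1 -> (forall i, 0 <= lam i n <= c) ->
  (Lsc lam w r n <= Lsc lam w (c * r) n <= (Lsc lam w r n).+1)%N.
Proof.
move=> r_ge0 c_le1 lam_c.
have c_ge0 : 0 <= c by have /andP[/le_trans] := lam_c ord0; apply.
have cr_le_r : c * r <= r by rewrite ler_piMl.
have prodlam_ge0 k : 0 <= prodlam lam w n k.
  by apply: prodr_ge0 => l _; have /andP[] := lam_c (w l).
have prodlamS_le k : prodlam lam w n k <= r -> prodlam lam w n k.+1 <= c * r.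
  move=> kr; rewrite /prodlam big_ord_recr /= mulrC.
  have /andP[lam_ge0 lam_le] := lam_c (w k).
  exact: ler_pM lam_ge0 (prodlam_ge0 k) lam_le kr.
rewrite /Lsc; case: pselect => [ex|no]; case: pselect => [ex'|no'] //.
- case: ex_minnP => m m_r m_min; case: ex_minnP => m' m'_r m'_min.
  by rewrite m_min ?(le_trans m'_r) ?m'_min ?prodlamS_le.
- by case: no'; have [k kr] := ex; exists k.+1; apply: prodlamS_le.
- by case: no; have [k kr] := ex'; exists k; apply: le_trans kr cr_le_r.
Qed.

Lemma measure_Bsym {R : realType} {N d : nat} (lam t : 'I_N.+1 -> 'I_d -> R)
    {p : 'I_N.+1 -> R} {mu : {measure set (SigmaM N) -> \bar R}}
    (mu_cyl : forall u, mu (cyl u) = (\prod_(a <- u) p a)%:E) w r M :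
  (forall k, Lsc lam w r k <= M)%N ->
  mu (Bsym lam t w r) = (\prod_(l < M) \sum_(j in Bsym_digits lam t w r l) p j)%:E.
Proof.
move=> L_M; rewrite -(measure_rect mu_cyl) BsymE.
congr (mu _); apply/seteqP; split => v vA l; first by move=> _; apply: vA.
case: (ltnP l M) => [lM|Ml]; first by apply: vA; rewrite lM.
by rewrite Bsym_digits_full ?inE // => k; apply: leq_trans (L_M k) Ml.
Qed.

Theorem lemma5p5 (R : realType) (N d : nat) (lam t : 'I_N.+1 -> 'I_d -> R)
  (Hlam : forall i n, 0 < lam i n < 1)
  (Hinv : forall i x, inCube x -> inCube (fIFS lam t i x))
  (Hdist : forall i j, i != j ->
     exists x, inCube x /\ fIFS lam t i x <> fIFS lam t j x)
  (Hcoord : forall m n : 'I_d, m != n -> exists i, lam i n != lam i m)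
  (p : 'I_N.+1 -> R) (Hp : forall i, 0 < p i) (Hp1 : \sum_i p i = 1)
  (mu : {measure set (SigmaM N) -> \bar R})
  (Hmu : forall u : seq 'I_N.+1, mu (cyl u) = (\prod_(a <- u) p a)%:E)
  (eps : R) (Heps : 0 < eps) (Heps1 : forall i n, lam i n < 1 - eps) :
  exists C1 : R, forall (w : Sigma N) (r : R), 0 < r <= 1 ->
    (mu (Bsym lam t w r) <= C1%:E * mu (Bsym lam t w ((1 - eps) * r)))%E.
Proof.
pose pmin := \prod_i p i.
have pmin_gt0 : 0 < pmin by apply: prodr_gt0.
exists (pmin ^+ d)^-1 => w r /andP[r_gt0 _].
set r' := (1 - eps) * r.
have L_step k : (Lsc lam w r k <= Lsc lam w r' k <= (Lsc lam w r k).+1)%N.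
  apply: Lsc_scale; rewrite ?(ltW r_gt0) ?gerBl ?(ltW Heps) // => i.
  by have /andP[/ltW -> _] := Hlam i k; rewrite ltW.
pose M := (\max_k (Lsc lam w r k + Lsc lam w r' k))%N.
rewrite (measure_Bsym lam t Hmu w r M) => [|k]; last first.
  by apply: leq_trans (leq_addr _ _) (leq_bigmax k).
rewrite (measure_Bsym lam t Hmu w r' M) => [|k]; last first.
  by apply: leq_trans (leq_addl _ _) (leq_bigmax k).
rewrite -EFinM lee_fin ler_pdivlMl ?exprn_gt0 //.
apply: (@ler_prod_except _ _ [set l : 'I_M | (l : nat) \in codom (Lsc lam w r)]%SET).
- by rewrite (ltW pmin_gt0) prodr_ile1 // => i _; rewrite ltW ?(p_le1 Hp Hp1).
- by move=> l; rewrite (psum_ge0 Hp) (psum_le1 Hp Hp1).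
- move=> l; apply: le_trans (prod_p_le Hp Hp1 (w l)) _.
  exact: p_le_psum Hp _ _ (mem_Bsym_digits lam t w r' l).
- move=> l; rewrite inE => l_out; rewrite (Bsym_digits_scale lam t w r r' l) // => k.
  by apply: contraNneq l_out => <-; apply: codom_f.
- by rewrite (leq_trans (card_ord_in_codom _ _ _)) ?card_ord.
Qed.
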